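(* The $k$ poles of a $k$-oriented Spherical Diagram do not all lie on a common great circle. Consequently, every attractor hull of a $k$-oriented SD has non-empty interior.
   Context: A geodesic arc on the unit sphere in $\mathbb R^3$ is the unique shortest curve joining two non-antipodal points. An arc $a$ blocks an arc $b$ (equivalently, $b$ hits $a$) if an endpoint of $b$ lies in the relative interior of $a$. A Spherical Diagram (SD) is a finite non-empty collection $\mathcal D$ of pairwise interior-disjoint geodesic arcs on the unit sphere such that each arc of $\mathcal D$ is blocked by arcs of $\mathcal D$ at each of its endpoints. An SD $\mathcal D$ is $k$-oriented if there exist a set $P$ of $k$ points on the unit sphere (poles), no two antipodal, and a function $f\colon\mathcal D\to P$ such that each arc $a\in\mathcal D$ lies on a great circle through $f(a)$ but contains neither $f(a)$ nor its antipode $-f(a)$ (the anti-pole of $f(a)$). An attractor of a $k$-oriented SD is a set of $k$ points, no two antipodal, chosen among its poles and anti-poles (i.e., one from each pair $\{p,-p\}$, $p\in P$). An attractor hull is the spherical convex hull of an attractor (which is the whole sphere if the attractor is not contained in any open hemisphere). *)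

From mathcomp Require Import all_boot all_order all_algebra.
From mathcomp Require Import reals.
Set Implicit Arguments. Unset Strict Implicit. Unset Printing Implicit Defensive.
Import Order.TTheory GRing.Theory Num.Theory.
Local Open Scope ring_scope.

Section Sphere.
Variable R : realType.

Definition vec := 'rV[R]_3.

Definition dot (u v : vec) : R := \sum_(i < 3) u 0 i * v 0 i.

Definition on_sphere (x : vec) : Prop := dot x x = 1.

(* A geodesic arc is given by its two endpoints (a, b): distinct,
   non-antipodal, on the unit sphere. *)
Definition sarc := (vec * vec)%type.

Definition arc_wf (e : sarc) : Prop :=
  on_sphere e.1 /\ on_sphere e.2 /\ e.1 <> e.2 /\ e.1 <> - e.2.

(* points of the (closed) shortest arc: radial projections onto the sphere of
   the segment [a, b] *)
Definition arc_pt (e : sarc) (x : vec) : Prop :=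
  on_sphere x /\ exists t lam : R, 0 <= t <= 1 /\ 0 < lam /\
    x = lam *: ((1 - t) *: e.1 + t *: e.2).

Definition arc_relint (e : sarc) (x : vec) : Prop :=
  on_sphere x /\ exists t lam : R, 0 < t < 1 /\ 0 < lam /\
    x = lam *: ((1 - t) *: e.1 + t *: e.2).

Definition great_circle (n : vec) (x : vec) : Prop :=
  on_sphere x /\ dot n x = 0.

Definition spherical_diagram (I : finType) (D : I -> sarc) : Prop :=
  (0 < #|I|)%N /\
  (forall i, arc_wf (D i)) /\
  (forall i j, i <> j -> forall x, arc_relint (D i) x -> ~ arc_relint (D j) x) /\
  (forall i, (exists j, arc_relint (D j) (D i).1) /\
             (exists j, arc_relint (D j) (D i).2)).

(* (p, f) witnesses that D is k-oriented: p enumerates the set P of k poles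
   (distinct, on the sphere, no two antipodal), f assigns a pole to each arc. *)
Definition k_oriented_by (I : finType) (D : I -> sarc) (k : nat)
    (p : 'I_k -> vec) (f : I -> 'I_k) : Prop :=
  (forall m, on_sphere (p m)) /\
  injective p /\
  (forall m m', p m <> - p m') /\
  (forall i, (exists n : vec, n <> 0 /\ great_circle n (p (f i)) /\
               (forall x, arc_pt (D i) x -> great_circle n x)) /\
             ~ arc_pt (D i) (p (f i)) /\ ~ arc_pt (D i) (- p (f i))).

Definition attractor (k : nat) (p : 'I_k -> vec) (s : 'I_k -> bool) (m : 'I_k) : vec :=
  if s m then p m else - p m.

Definition sph_hull (k : nat) (q : 'I_k -> vec) (x : vec) : Prop :=
  on_sphere x /\ exists c : 'I_k -> R, (forall m, 0 <= c m) /\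
    x = \sum_(m < k) c m *: q m.

Definition sph_nonempty_interior (S : vec -> Prop) : Prop :=
  exists x, S x /\ exists e : R, 0 < e /\
    forall y, on_sphere y -> dot (y - x) (y - x) < e -> S y.

End Sphere.

From mathcomp Require Import all_boot all_order all_algebra.
From mathcomp Require Import boolp reals ring lra.
Set Implicit Arguments. Unset Strict Implicit. Unset Printing Implicit Defensive.
Import Order.TTheory GRing.Theory Num.Theory.
Local Open Scope ring_scope.

(* Suppose all poles lie on the great circle orthogonal to n.  No arc crosses
   that circle, because the arc's own great circle meets it only at the arc's
   pole and anti-pole; hence the two endpoints of every arc lie on the same
   side.  Take an endpoint of least positive height [dot n _]: it lies in the
   relative interior of a blocking arc, so its height is lam > 1 times a convex
   combination of the heights of that arc's endpoints, which are positive and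
   thus at least its own height -- a contradiction.  Symmetrically for negative
   heights, so all arcs lie on the circle, where an endpoint blocked by another
   arc forces the two arcs to overlap.  For the second claim, three linearly
   independent poles give three independent attractor points, and Cramer's rule
   shows that their cone contains a neighbourhood of its central direction. *)

Section Sphere.
Variable R : realType.
Local Notation V := (vec R).
Implicit Types (u v w m n q x y z : V) (a b c t r lam : R) (e : sarc R).

Local Notation i0 := (@ord0 2).
Local Notation i1 := (@Ordinal 3 1 isT).
Local Notation i2 := (@Ordinal 3 2 isT).

Lemma dotE u v : dot u v = u 0 i0 * v 0 i0 + u 0 i1 * v 0 i1 + u 0 i2 * v 0 i2.
Proof.
rewrite /dot !big_ord_recl big_ord0 addr0 addrA.
have -> : lift ord0 ord0 = i1 :> 'I_3 by apply: val_inj.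
have -> : lift ord0 (lift ord0 ord0) = i2 :> 'I_3 by apply: val_inj.
by [].
Qed.

Lemma vec3P u v : u 0 i0 = v 0 i0 -> u 0 i1 = v 0 i1 -> u 0 i2 = v 0 i2 -> u = v.
Proof.
move=> e0 e1 e2; apply/rowP => -[[|[|[|//]]] lti].
- by rewrite (_ : Ordinal lti = i0) //; apply: val_inj.
- by rewrite (_ : Ordinal lti = i1) //; apply: val_inj.
- by rewrite (_ : Ordinal lti = i2) //; apply: val_inj.
Qed.

Definition vec3 a b c : V := \row_(j < 3) [:: a; b; c]`_j.

Definition cross u v : V :=
  vec3 (u 0 i1 * v 0 i2 - u 0 i2 * v 0 i1) (u 0 i2 * v 0 i0 - u 0 i0 * v 0 i2)
       (u 0 i0 * v 0 i1 - u 0 i1 * v 0 i0).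

Definition triple u v w : R := dot (cross u v) w.

Local Ltac coords := rewrite /triple /cross /vec3 ?(dotE, mxE) /=.
Local Ltac vec_ring := apply: vec3P; coords; ring.

Lemma dotDr u v w : dot u (v + w) = dot u v + dot u w. Proof. by coords; ring. Qed.
Lemma dotZl u v a : dot (a *: u) v = a * dot u v. Proof. by coords; ring. Qed.
Lemma dotZr u v a : dot u (a *: v) = a * dot u v. Proof. by coords; ring. Qed.
Lemma dotNl u v : dot (- u) v = - dot u v. Proof. by coords; ring. Qed.
Lemma dotNr u v : dot u (- v) = - dot u v. Proof. by coords; ring. Qed.
Lemma dot0r u : dot u 0 = 0. Proof. by coords; ring. Qed.

Lemma dot_ge0 u : 0 <= dot u u.
Proof. by coords; nra. Qed.

Lemma dot_eq0 u : (dot u u == 0) = (u == 0).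
Proof.
apply/eqP/eqP => [|->]; last exact: dot0r.
coords => uu0; apply: vec3P; rewrite mxE; nra.
Qed.

Lemma dot_gt0 u : (0 < dot u u) = (u != 0).
Proof. by rewrite lt_neqAle dot_ge0 andbT eq_sym dot_eq0. Qed.

Lemma on_sphere_neq0 u : on_sphere u -> u != 0.
Proof. by rewrite -dot_eq0 => ->; rewrite oner_eq0. Qed.

Lemma on_sphereN u : on_sphere u -> on_sphere (- u).
Proof. by rewrite /on_sphere dotNl dotNr opprK. Qed.

Lemma on_sphere_scale x y c : on_sphere x -> on_sphere y -> x = c *: y -> x = y \/ x = - y.
Proof.
rewrite /on_sphere => hx hy xE; move: hx.
rewrite xE dotZl dotZr hy mulr1 -expr2 => /eqP; rewrite sqrf_eq1 => /orP[]/eqP ->.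
- by left; rewrite scale1r.
- by right; rewrite scaleN1r.
Qed.

Lemma dot_comb u v a b : on_sphere u -> on_sphere v ->
  dot (a *: u + b *: v) (a *: u + b *: v) = a ^+ 2 + b ^+ 2 + 2 * a * b * dot u v.
Proof.
have -> : dot (a *: u + b *: v) (a *: u + b *: v) =
    a ^+ 2 * dot u u + b ^+ 2 * dot v v + 2 * a * b * dot u v by coords; ring.
by move=> -> ->; rewrite !mulr1.
Qed.

Lemma dot_lt1 u v : on_sphere u -> on_sphere v -> u != v -> dot u v < 1.
Proof.
move=> hu hv uv.
have : 0 < dot (1 *: u + (-1) *: v) (1 *: u + (-1) *: v).
  by rewrite dot_gt0 scale1r scaleN1r subr_eq0.
rewrite dot_comb //; lra.
Qed.

Lemma dot_gtN1 u v : on_sphere u -> on_sphere v -> u != - v -> -1 < dot u v.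
Proof. by move=> hu /on_sphereN hv /(dot_lt1 hu hv); rewrite dotNr; lra. Qed.

Lemma comb_neq0 u v a b : on_sphere u -> on_sphere v -> u != - v ->
  0 <= a -> 0 <= b -> 0 < a + b -> a *: u + b *: v != 0.
Proof.
move=> hu hv uv a0 b0 ab0; rewrite -dot_gt0 dot_comb //.
have d1 := dot_gtN1 hu hv uv; have [ab|] := eqVneq (a * b) 0; first by nra.
rewrite mulf_eq0 negb_or => /andP[an0 bn0].
have : 0 < a * b * (1 + dot u v) by rewrite !mulr_gt0 ?lt_def ?an0 ?bn0 //; lra.
have := sqr_ge0 (a - b); nra.
Qed.

Lemma lerp_in_ball u v t : on_sphere u -> on_sphere v -> u != v -> 0 < t < 1 ->
  dot ((1 - t) *: u + t *: v) ((1 - t) *: u + t *: v) < 1.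
Proof.
move=> hu hv uv /andP[t0 t1]; rewrite dot_comb //.
have : 0 < t * (1 - t) * (1 - dot u v).
  by rewrite !mulr_gt0 // subr_gt0 // dot_lt1.
nra.
Qed.

Lemma on_sphere_normalize z : z != 0 -> exists r, 0 < r /\ on_sphere (r *: z).
Proof.
rewrite -dot_gt0 => z0; exists (Num.sqrt (dot z z))^-1.
rewrite invr_gt0 sqrtr_gt0 z0; split=> //.
rewrite /on_sphere dotZl dotZr mulrA -expr2 exprVn sqr_sqrtr ?ltW // mulVf //.
by rewrite gt_eqF.
Qed.

Lemma dot_cross u v : dot (cross u v) (cross u v) = dot u u * dot v v - dot u v ^+ 2.
Proof. by coords; ring. Qed.

Lemma cross_neq0 u v : on_sphere u -> on_sphere v -> u != v -> u != - v -> cross u v != 0.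
Proof.
move=> hu hv uv uNv; rewrite -dot_gt0 dot_cross hu hv mul1r subr_gt0.
have := dot_lt1 hu hv uv; have := dot_gtN1 hu hv uNv; nra.
Qed.

Lemma cross_eq0 u v : cross u v = 0 -> dot u u *: v = dot v u *: u.
Proof.
have -> : dot u u *: v = dot v u *: u + cross (cross u v) u by vec_ring.
by move=> ->; vec_ring.
Qed.

Lemma cross_orth m n y : dot m y = 0 -> dot n y = 0 ->
  dot (cross m n) (cross m n) *: y = dot y (cross m n) *: cross m n.
Proof.
have -> : dot (cross m n) (cross m n) *: y = dot y (cross m n) *: cross m n
    + dot m y *: cross n (cross m n) - dot n y *: cross m (cross m n) by vec_ring.
by move=> -> ->; rewrite !scale0r addr0 subr0.
Qed.

Lemma orth2_colinear m n q y : cross m n != 0 -> q != 0 ->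
  dot m q = 0 -> dot n q = 0 -> dot m y = 0 -> dot n y = 0 -> exists c, y = c *: q.
Proof.
move=> w0 q0 mq nq my ny.
have qE := cross_orth mq nq; have yE := cross_orth my ny.
set w := cross m n in w0 qE yE; have ww : dot w w != 0 by rewrite dot_eq0.
have qw : dot q w != 0.
  apply: contraNneq q0 => qw; move: qE; rewrite qw scale0r => /eqP.
  by rewrite scaler_eq0 (negbTE ww).
exists (dot y w / dot q w); apply: (scalerI ww).
by rewrite yE scalerA mulrC -scalerA qE scalerA divfK.
Qed.

Lemma cramer3 u v w y :
  triple u v w *: y = triple y v w *: u + triple u y w *: v + triple u v y *: w.
Proof. by vec_ring. Qed.

Lemma tripleZ u v w a b c :
  triple (a *: u) (b *: v) (c *: w) = a * b * c * triple u v w.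
Proof. by coords; ring. Qed.

Lemma triple_eq0_orth n u v w : n != 0 ->
  dot n u = 0 -> dot n v = 0 -> dot n w = 0 -> triple u v w = 0.
Proof.
move=> n0 nu nv nw; apply/eqP; move: n0; apply: contraNT => T0.
have : triple u v w *: n = dot n u *: cross v w + dot n v *: cross w u + dot n w *: cross u v.
  by vec_ring.
by rewrite nu nv nw !scale0r !addr0 => /eqP; rewrite scaler_eq0 (negbTE T0).
Qed.

Lemma coplanar_decomp u v z : cross u v != 0 -> triple u v z = 0 ->
  exists a b, z = a *: u + b *: v.
Proof.
move=> c0 T0; set c := cross u v in c0.
have Tc : triple u v c != 0 by rewrite /triple dot_eq0.
exists (triple z v c / triple u v c), (triple u z c / triple u v c).
apply: (scalerI Tc); rewrite cramer3 T0 scale0r addr0 scalerDr !scalerA.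
by rewrite !(mulrC (triple u v c)) !divfK.
Qed.

Lemma orth_exists q : exists n, n != 0 /\ dot n q = 0.
Proof.
have [q01 | q01] := boolP ((q 0 i0 == 0) && (q 0 i1 == 0)).
  move: q01 => /andP[/eqP q0 _]; exists (vec3 1 0 0); split; last by coords; rewrite q0; ring.
  by apply/eqP => /rowP/(_ i0); rewrite !mxE /= => /eqP; rewrite oner_eq0.
exists (vec3 (- q 0 i1) (q 0 i0) 0); split; last by coords; ring.
apply: contraNneq q01 => /rowP e; have := e i0; have := e i1; rewrite !mxE /=.
by move=> -> /eqP; rewrite oppr_eq0 eqxx => ->.
Qed.

Lemma coplanar_common_normal k (q : 'I_k -> V) :
  (forall j1 j2 j3, triple (q j1) (q j2) (q j3) = 0) ->
  exists n, n != 0 /\ forall j, dot n (q j) = 0.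
Proof.
move=> T0.
have [[j1 j2] /= c0 | par] := pickP (fun jj : 'I_k * 'I_k => cross (q jj.1) (q jj.2) != 0).
  by exists (cross (q j1) (q j2)); split=> // j; apply: T0.
have [j1 q0 | zero] := pickP (fun j => q j != 0); last first.
  have [n [n0 _]] := orth_exists 0; exists n; split=> // j.
  by move/negbFE/eqP: (zero j) => ->; rewrite dot0r.
have [n [n0 nq]] := orth_exists (q j1); exists n; split=> // j.
have /eqP/cross_eq0 qjE := negbFE (par (j1, j)).
have q1q1 : dot (q j1) (q j1) != 0 by rewrite dot_eq0.
by apply: (mulfI q1q1); rewrite mulr0 -dotZr qjE dotZr nq mulr0.
Qed.

Lemma lerp_root a b : Num.sg a != Num.sg b ->
  exists t, 0 <= t <= 1 /\ (1 - t) * a + t * b = 0.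
Proof.
move=> sab.
have ab : a - b != 0 by apply: contraNneq sab => /eqP; rewrite subr_eq0 => /eqP ->.
have abN : a * b <= 0.
  by move: sab; case: sgrP => ha; case: sgrP => hb; rewrite ?eqxx //; nra.
have ab2 : 0 < (a - b) ^+ 2 by rewrite exprn_even_gt0.
exists (a / (a - b)); split; last by field.
have -> : a / (a - b) = a * (a - b) / (a - b) ^+ 2 by field.
have := sqr_ge0 a; have := sqr_ge0 b => b2 a2.
apply/andP; split; first by rewrite divr_ge0 ?sqr_ge0 //; nra.
by rewrite ler_pdivrMr // mul1r; nra.
Qed.

Lemma exists_small_pos a b c d : 0 < a -> 0 < b ->
  exists s, 0 < s /\ 0 < a + s * c /\ 0 < b + s * d.
Proof.
move=> a0 b0; set l := 1 + `|c| + `|d|.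
have l0 : 0 < l by rewrite /l; have := normr_ge0 c; have := normr_ge0 d; lra.
set m := Num.min a b.
have ma : m <= a by rewrite ge_min lexx.
have mb : m <= b by rewrite ge_min lexx orbT.
have m0 : 0 < m by rewrite /m lt_min a0 b0.
exists (m / l); have s0 : 0 < m / l by rewrite divr_gt0.
have sl : m / l * l = m by rewrite divfK ?gt_eqF.
have := ler_norm (- c); have := ler_norm (- d); rewrite !normrN.
have := normr_ge0 c; have := normr_ge0 d; rewrite /l in sl; nra.
Qed.

Lemma arc_pt_fst e : on_sphere e.1 -> arc_pt e e.1.
Proof.
move=> he; split=> //; exists 0, 1; rewrite lexx ler01 ltr01.
by split=> //; split=> //; rewrite subr0 !scale1r scale0r addr0.
Qed.

Lemma arc_pt_snd e : on_sphere e.2 -> arc_pt e e.2.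
Proof.
move=> he; split=> //; exists 1, 1; rewrite lexx ler01 ltr01.
by split=> //; split=> //; rewrite subrr !scale1r scale0r add0r.
Qed.

Lemma arc_relint_cone e x a b r : on_sphere x -> 0 < a -> 0 < b -> 0 < r ->
  x = r *: (a *: e.1 + b *: e.2) -> arc_relint e x.
Proof.
move=> hx a0 b0 r0 xE; split=> //; exists (b / (a + b)), (r * (a + b)).
have ab0 : 0 < a + b by rewrite addr_gt0.
split; first by rewrite divr_gt0 //= ltr_pdivrMr // mul1r ltrDr.
split; first by rewrite mulr_gt0.
rewrite xE scalerDr [RHS]scalerDr !scalerA; congr (_ *: _ + _ *: _); by field; rewrite gt_eqF.
Qed.

Lemma arc_relint_scale_gt1 e t lam : arc_wf e -> 0 < t < 1 -> 0 < lam ->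
  on_sphere (lam *: ((1 - t) *: e.1 + t *: e.2)) -> 1 < lam.
Proof.
case: e => u v /= [hu [hv [/eqP uv _]]] t01 lam0.
rewrite /on_sphere dotZl dotZr mulrA.
have := lerp_in_ball hu hv uv t01; have := dot_ge0 ((1 - t) *: u + t *: v).
set s := dot _ _ => s0 s1 ss.
have : 1 < lam * lam.
  by rewrite ltNge; apply/negP => /(ler_piMl s0); lra.
nra.
Qed.

Lemma colinear_lerp_arc_pt e q t c : on_sphere q -> 0 <= t <= 1 -> c != 0 ->
  (1 - t) *: e.1 + t *: e.2 = c *: q -> arc_pt e q \/ arc_pt e (- q).
Proof.
move=> hq t01 c0 yE; have [c_lt0 | c_ge0] := ltP c 0.
  right; split; first exact: on_sphereN.
  exists t, (- c^-1); split=> //; split; first by rewrite oppr_gt0 invr_lt0.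
  by rewrite yE scalerA mulNr mulVf // scaleN1r.
left; split=> //; exists t, c^-1; split=> //; split; first by rewrite invr_gt0 lt_def c0.
by rewrite yE scalerA mulVf // scale1r.
Qed.

Lemma arc_sides n m q e : arc_wf e -> m != 0 -> great_circle m q ->
  (forall x, arc_pt e x -> great_circle m x) -> dot n q = 0 ->
  ~ arc_pt e q -> ~ arc_pt e (- q) -> Num.sg (dot n e.1) = Num.sg (dot n e.2).
Proof.
case: e => a b /= [ha [hb [_ /eqP aNb]]] m0 [hq mq] onm nq Nq Nmq.
have [_ ma] := onm a (arc_pt_fst ha); have [_ mb] := onm b (arc_pt_snd hb).
have [/cross_eq0 nE | w0] := eqVneq (cross m n) 0.
  (* n is parallel to m, so the whole arc lies on the circle n^\perp. *)
  have mm : dot m m != 0 by rewrite dot_eq0.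
  suff n_orth x : dot m x = 0 -> dot n x = 0 by rewrite !n_orth.
  by move=> mx; apply: (mulfI mm); rewrite mulr0 -dotZl nE dotZl mx mulr0.
apply/eqP; apply: contraT => /lerp_root[t [t01 nt]].
set y := (1 - t) *: a + t *: b.
have my : dot m y = 0 by rewrite dotDr !dotZr ma mb !mulr0 addr0.
have ny : dot n y = 0 by rewrite dotDr !dotZr.
have [c yE] := orth2_colinear w0 (on_sphere_neq0 hq) mq nq my ny.
have y0 : y != 0.
  by case/andP: t01 => t0 t1; rewrite comb_neq0 ?subr_ge0 ?subrK ?ltr01.
have c0 : c != 0 by apply: contraNneq y0 => c0; rewrite yE c0 scale0r.
by case: (@colinear_lerp_arc_pt (a, b) _ _ _ hq t01 c0 yE).
Qed.

Section Diagram.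
Variables (I : finType) (D : I -> sarc R).
Hypothesis D_wf : forall i, arc_wf (D i).
Hypothesis D_blocked : forall i,
  (exists j, arc_relint (D j) (D i).1) /\ (exists j, arc_relint (D j) (D i).2).

Lemma blocked_endpoints_nonpos n :
  (forall i, Num.sg (dot n (D i).1) = Num.sg (dot n (D i).2)) ->
  forall i, dot n (D i).1 <= 0 /\ dot n (D i).2 <= 0.
Proof.
move=> sgE; pose ep (x : I * bool) := if x.2 then (D x.1).1 else (D x.1).2.
suff nonpos (x : I * bool) : dot n (ep x) <= 0.
  by move=> i; split; [exact: (nonpos (i, true)) | exact: (nonpos (i, false))].
rewrite leNgt; apply/negP => pos_x.
have [y pos_y ymin] := arg_minP (P := [pred o | 0 < dot n (ep o)]) (fun o => dot n (ep o)) pos_x.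
have [j [hy [t [lam [t01 [lam0 yE]]]]]] : exists j, arc_relint (D j) (ep y).
  by rewrite /ep; case: y.2; have [[j1 h1] [j2 h2]] := D_blocked y.1; [exists j1 | exists j2].
have lam1 : 1 < lam by apply: arc_relint_scale_gt1 (D_wf j) t01 lam0 _; rewrite -yE.
have nyE : dot n (ep y) = lam * ((1 - t) * dot n (D j).1 + t * dot n (D j).2).
  by rewrite yE dotZr dotDr !dotZr.
move: t01 pos_y => /andP[t0 t1] /= pos_y.
have [pos_u | u_le0] := ltP 0 (dot n (D j).1).
  have pos_v : 0 < dot n (D j).2 by rewrite -sgr_gt0 -sgE sgr_gt0.
  have := ymin (j, true) pos_u; have := ymin (j, false) pos_v; rewrite /= => yv yu.
  have : dot n (ep y) <= (1 - t) * dot n (D j).1 + t * dot n (D j).2 by nra.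
  nra.
have v_le0 : dot n (D j).2 <= 0 by rewrite -sgr_le0 -sgE sgr_le0.
have : (1 - t) * dot n (D j).1 + t * dot n (D j).2 <= 0 by nra.
nra.
Qed.

Lemma blocked_endpoints_orth n :
  (forall i, Num.sg (dot n (D i).1) = Num.sg (dot n (D i).2)) ->
  forall i, dot n (D i).1 = 0 /\ dot n (D i).2 = 0.
Proof.
move=> sgE i.
have sgNE i' : Num.sg (dot (- n) (D i').1) = Num.sg (dot (- n) (D i').2).
  by rewrite !dotNl !sgrN sgE.
have := blocked_endpoints_nonpos sgE i; have := blocked_endpoints_nonpos sgNE i.
rewrite !dotNl !oppr_le0; lra.
Qed.

End Diagram.

Lemma fst_notin_arc_relint e : arc_wf e -> ~ arc_relint e e.1.
Proof.
case: e => a b /= [ha [hb [ab aNb]]] [_ [t [lam [/andP[t0 t1] [lam0 aE]]]]].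
have lt0 : lam * t != 0 by rewrite mulf_neq0 ?gt_eqF.
have bE : b = ((1 - lam * (1 - t)) / (lam * t)) *: a.
  apply: (scalerI lt0); rewrite scalerA [X in X *: a]mulrC divfK // scalerBl scale1r {1}aE.
  by vec_ring.
case: (on_sphere_scale hb ha bE) => [ba | baN]; first by apply: ab.
by apply: aNb; rewrite baN opprK.
Qed.

Lemma arc_relint_overlap n e e' : n != 0 -> arc_wf e -> arc_wf e' ->
  dot n e.1 = 0 -> dot n e.2 = 0 -> dot n e'.1 = 0 -> dot n e'.2 = 0 ->
  arc_relint e' e.1 -> exists x, arc_relint e x /\ arc_relint e' x.
Proof.
case: e e' => a b [u v] /= n0 [ha [hb _]] [hu [hv [/eqP uv /eqP uNv]]] na nb nu nv.
move=> [_ [t [lam [/andP[t0 t1] [lam0 aE]]]]].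
have [al [be bE]] := coplanar_decomp (cross_neq0 hu hv uv uNv) (triple_eq0_orth n0 nu nv nb).
have A0 : 0 < lam * (1 - t) by rewrite mulr_gt0 // subr_gt0.
have B0 : 0 < lam * t by rewrite mulr_gt0.
have [s [s0 [As Bs]]] := exists_small_pos al be A0 B0.
(* Moving from a slightly towards b keeps both coefficients along u and v positive. *)
set z := a + s *: b.
have zE : z = (lam * (1 - t) + s * al) *: u + (lam * t + s * be) *: v.
  by rewrite /z aE bE; vec_ring.
have z0 : z != 0 by rewrite zE; apply: comb_neq0 => //; rewrite ?ltW // addr_gt0.
have [r [r0 hx]] := on_sphere_normalize z0.
exists (r *: z); split.
  by apply: (@arc_relint_cone (a, b) _ 1 s r) => //; rewrite scale1r.
exact: (@arc_relint_cone (u, v) _ _ _ _ hx As Bs r0 (congr1 _ zE)).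
Qed.

Lemma sqr_triple_le w u v : on_sphere u -> on_sphere v -> triple w u v ^+ 2 <= dot w w.
Proof.
move=> hu hv.
have -> : triple w u v = dot w (cross u v) by coords; ring.
have cs : 0 <= dot (cross w (cross u v)) (cross w (cross u v)) := dot_ge0 _.
have := dot_ge0 w; have := sqr_ge0 (dot u v).
move: cs; rewrite !dot_cross hu hv mul1r; nra.
Qed.

Lemma sph_hull3 k (q : 'I_k -> V) j1 j2 j3 c1 c2 c3 y : on_sphere y ->
  0 <= c1 -> 0 <= c2 -> 0 <= c3 -> y = c1 *: q j1 + c2 *: q j2 + c3 *: q j3 ->
  sph_hull q y.
Proof.
move=> hy c10 c20 c30 yE; split=> //.
pose pick (j0 : 'I_k) c j := (j == j0)%:R * c.
exists (fun j => pick j1 c1 j + pick j2 c2 j + pick j3 c3 j); split.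
  by move=> j; rewrite !addr_ge0 // mulr_ge0 ?ler0n.
have sum_pick j0 c : \sum_(j < k) pick j0 c j *: q j = c *: q j0.
  rewrite (bigD1 j0) //= /pick eqxx mul1r big1 ?addr0 // => j /negbTE ->.
  by rewrite mul0r scale0r.
by rewrite yE -!sum_pick -!big_split; apply: eq_bigr => j _; rewrite !scalerDl.
Qed.

Lemma sph_hull_interior k (q : 'I_k -> V) j1 j2 j3 :
  on_sphere (q j1) -> on_sphere (q j2) -> on_sphere (q j3) ->
  triple (q j1) (q j2) (q j3) != 0 -> sph_nonempty_interior (sph_hull q).
Proof.
set q1 := q j1; set q2 := q j2; set q3 := q j3; set T := triple q1 q2 q3.
move=> h1 h2 h3 T0.
have [r [r0 hx]] : exists r, 0 < r /\ on_sphere (r *: (q1 + q2 + q3)).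
  apply: on_sphere_normalize; apply: contraNneq T0 => s0.
  have <- : triple q1 q2 (q1 + q2 + q3) = T by rewrite /T; coords; ring.
  by rewrite s0 /triple dot0r.
set x := r *: (q1 + q2 + q3).
have near y : on_sphere y -> dot (y - x) (y - x) < (r * T) ^+ 2 -> sph_hull q y.
  move=> hy yx; set w := y - x.
  have coef u v : on_sphere u -> on_sphere v -> 0 < r + triple w u v / T.
    move=> hu hv; have : (triple w u v / T) ^+ 2 < r ^+ 2.
      rewrite expr_div_n ltr_pdivrMr ?exprn_even_gt0 // -exprMn.
      exact: le_lt_trans (sqr_triple_le w hu hv) yx.
    nra.
  apply: (sph_hull3 (j1 := j1) (j2 := j2) (j3 := j3)) hy (ltW (coef _ _ h2 h3))
    (ltW (coef _ _ h3 h1)) (ltW (coef _ _ h1 h2)) _.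
  have yE : T *: y = (r * T + triple w q2 q3) *: q1 + (r * T + triple w q3 q1) *: q2
      + (r * T + triple w q1 q2) *: q3.
    by rewrite cramer3 /w /x /T; congr (_ *: _ + _ *: _ + _ *: _); coords; ring.
  apply: (scalerI T0); rewrite yE !scalerDr !scalerA.
  by congr (_ *: _ + _ *: _ + _ *: _); field.
have e0 : 0 < (r * T) ^+ 2 by rewrite exprn_even_gt0 // mulf_neq0 // gt_eqF.
exists x; split; first by apply: near; rewrite // subrr dot0r.
by exists ((r * T) ^+ 2); split.
Qed.

Lemma attractorE k (p : 'I_k -> V) s j : attractor p s j = (-1) ^+ (~~ s j) *: p j.
Proof. by rewrite /attractor; case: (s j); rewrite ?scale1r ?scaleN1r. Qed.

Lemma attractor_on_sphere k (p : 'I_k -> V) s j :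
  (forall j, on_sphere (p j)) -> on_sphere (attractor p s j).
Proof. by rewrite /attractor; case: (s j) => hp; [| apply: on_sphereN]; apply: hp. Qed.

End Sphere.

Theorem mainTheorem13 (R : realType) (I : finType) (D : I -> sarc R) (k : nat)
    (p : 'I_k -> vec R) (f : I -> 'I_k) :
  spherical_diagram D -> k_oriented_by D p f ->
  (~ exists n : vec R, n <> 0 /\ forall m, great_circle n (p m)) /\
  (forall s : 'I_k -> bool, sph_nonempty_interior (sph_hull (attractor p s))).
Proof.
move=> [/card_gt0P[i0 _] [wf [disj blk]]] [hp [_ [_ orient]]].
have sides n : (forall j, dot n (p j) = 0) ->
    forall i, Num.sg (dot n (D i).1) = Num.sg (dot n (D i).2).
  move=> np i; have [[m [/eqP m0 [pm onm]]] [Nq Nmq]] := orient i.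
  exact: arc_sides (wf i) m0 pm onm (np _) Nq Nmq.
have not_cocircular : ~ exists n : vec R, n <> 0 /\ forall j, great_circle n (p j).
  move=> [n [/eqP n0 np]].
  have orth := blocked_endpoints_orth wf blk (sides n (fun j => (np j).2)).
  have [[j aj] _] := blk i0.
  have [x [xi xj]] := arc_relint_overlap n0 (wf i0) (wf j)
    (orth i0).1 (orth i0).2 (orth j).1 (orth j).2 aj.
  apply: (disj i0 j _ x xi xj) => ij.
  by apply: (fst_notin_arc_relint (wf i0)); rewrite {1}ij.
split=> // s.
have [j1 [j2 [j3 T0]]] : exists j1 j2 j3, triple (p j1) (p j2) (p j3) != 0.
  apply: contra_notP not_cocircular => noT.
  have T0 j1 j2 j3 : triple (p j1) (p j2) (p j3) = 0.
    by apply/eqP; apply: contra_notT noT => T0; exists j1, j2, j3.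
  have [n [/eqP n0 np]] := coplanar_common_normal T0.
  by exists n; split=> // j; split.
apply: (sph_hull_interior (j1 := j1) (j2 := j2) (j3 := j3)); try exact: attractor_on_sphere.
by rewrite !attractorE tripleZ !mulf_neq0 ?signr_eq0.
Qed.
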